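(* Let $R\in\mathbb R$ and let $f:[0,R)\to\mathbb R$ be continuously differentiable and satisfy (h1) $f(0)>0$, $f'(0)=-1$; (h2) $f'$ is strictly increasing and convex; (h3) $f(t)<0$ for some $t\in(0,R)$. Let $\beta:=\sup_{t\in[0,R)}-f(t)$ and $\bar t:=\sup\{t\in[0,R):f'(t)<0\}$. If $0\le\rho<\beta/2$, then $\rho<\bar t/2<\bar t$ and $f'(\rho)<0$. *)

From Stdlib Require Import Reals.
Open Scope R_scope.

Definition in_dom (Rr t : R) : Prop := 0 <= t < Rr.

(* [df t] is the derivative of [f] at [t] relative to the domain [0, Rr)
   (one-sided at the endpoint 0). *)
Definition has_deriv_on_dom (Rr : R) (f : R -> R) (t l : R) : Prop :=
  forall eps : R, 0 < eps -> exists delta : R, 0 < delta /\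
    forall h : R, h <> 0 -> in_dom Rr (t + h) -> Rabs h < delta ->
      Rabs ((f (t + h) - f t) / h - l) < eps.

Definition cont_on_dom (Rr : R) (g : R -> R) (t : R) : Prop :=
  forall eps : R, 0 < eps -> exists delta : R, 0 < delta /\
    forall s : R, in_dom Rr s -> Rabs (s - t) < delta -> Rabs (g s - g t) < eps.

Definition C1_on_dom (Rr : R) (f df : R -> R) : Prop :=
  (forall t, in_dom Rr t -> has_deriv_on_dom Rr f t (df t)) /\
  (forall t, in_dom Rr t -> cont_on_dom Rr df t).

Definition strictly_increasing_on_dom (Rr : R) (g : R -> R) : Prop :=
  forall x y, in_dom Rr x -> in_dom Rr y -> x < y -> g x < g y.

Definition convex_on_dom (Rr : R) (g : R -> R) : Prop :=
  forall x y l, in_dom Rr x -> in_dom Rr y -> 0 <= l <= 1 ->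
    g (l * x + (1 - l) * y) <= l * g x + (1 - l) * g y.

From Stdlib Require Import Reals Lra.
Open Scope R_scope.

(* Since [f' > -1] on [(0, R)] and [f(0) > 0], the function [f(t) + t] stays
   positive, i.e. [-f(t) < t].  Beyond [tbar] the derivative is nonnegative,
   so [f] does not decrease there and [-f] cannot climb above [tbar] either.
   Hence [beta <= tbar], and [rho < beta / 2] lies in the region where [f' < 0]. *)

Lemma has_deriv_on_dom_interior (Rr : R) (f : R -> R) (t l : R) :
  0 < t < Rr -> has_deriv_on_dom Rr f t l -> derivable_pt_lim f t l.
Proof.
  intros Ht Hd eps Heps.
  destruct (Hd eps Heps) as [d [Hd0 Hdiff]].
  assert (Hmin : 0 < Rmin d (Rmin t (Rr - t))) by (repeat apply Rmin_pos; lra).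
  exists (mkposreal _ Hmin); intros h Hh0 Hh; simpl in Hh.
  pose proof (Rmin_l d (Rmin t (Rr - t))); pose proof (Rmin_r d (Rmin t (Rr - t))).
  pose proof (Rmin_l t (Rr - t)); pose proof (Rmin_r t (Rr - t)).
  apply Hdiff; [exact Hh0 | | lra].
  apply Rabs_def2 in Hh; unfold in_dom; lra.
Qed.

Lemma has_deriv_on_dom_cont (Rr : R) (f : R -> R) (t l : R) :
  in_dom Rr t -> has_deriv_on_dom Rr f t l -> cont_on_dom Rr f t.
Proof.
  intros Ht Hd eps Heps.
  destruct (Hd 1 Rlt_0_1) as [d [Hd0 Hdiff]].
  set (K := Rabs l + 1).
  assert (HK : 0 < K) by (pose proof (Rabs_pos l); unfold K; lra).
  assert (Hmin : 0 < Rmin d (eps / K)) by (apply Rmin_pos; [lra | apply Rdiv_lt_0_compat; lra]).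
  exists (Rmin d (eps / K)); split; [exact Hmin |].
  intros s Hs Hst.
  pose proof (Rmin_l d (eps / K)); pose proof (Rmin_r d (eps / K)).
  destruct (Req_dec s t) as [-> | Hne]; [rewrite Rminus_diag, Rabs_R0; lra |].
  assert (Hh0 : s - t <> 0) by lra.
  assert (Hq := Hdiff (s - t) Hh0).
  replace (t + (s - t)) with s in Hq by ring.
  specialize (Hq Hs ltac:(lra)).
  assert (Hquot : Rabs ((f s - f t) / (s - t)) <= K).
  { pose proof (Rabs_triang ((f s - f t) / (s - t) - l) l).
    replace ((f s - f t) / (s - t) - l + l) with ((f s - f t) / (s - t)) in * by ring.
    unfold K; lra. }
  replace (f s - f t) with ((s - t) * ((f s - f t) / (s - t))) by (field; exact Hh0).
  rewrite Rabs_mult.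
  apply Rle_lt_trans with (Rabs (s - t) * K).
  - apply Rmult_le_compat_l; [apply Rabs_pos | exact Hquot].
  - apply Rlt_le_trans with (eps / K * K); [apply Rmult_lt_compat_r; lra |].
    right; field; lra.
Qed.

Section Proposition5p2.

Variables (Rr : R) (f df : R -> R).
Hypothesis f_deriv : forall t, in_dom Rr t -> has_deriv_on_dom Rr f t (df t).

Lemma add_linear_le_of_deriv_ge (k a b : R) :
  0 < a -> a < b -> b < Rr -> (forall c, a < c < b -> - k <= df c) ->
  f a + k * a <= f b + k * b.
Proof.
  intros Ha Hab Hb Hdf.
  assert (Hg : forall c, a <= c <= b ->
            derivable_pt_lim (fun x => f x + k * x) c (df c + k * 1)).
  { intros c Hc.
    apply (derivable_pt_lim_plus f (mult_real_fct k id)).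
    - apply (has_deriv_on_dom_interior Rr); [lra |].
      apply f_deriv; unfold in_dom; lra.
    - apply derivable_pt_lim_scal, derivable_pt_lim_id. }
  destruct (MVT_cor2 _ _ a b Hab Hg) as [c [Heq Hc]].
  specialize (Hdf c Hc).
  assert (0 <= (df c + k * 1) * (b - a)) by (apply Rmult_le_pos; lra).
  lra.
Qed.

Hypothesis f0_pos : 0 < f 0.
Hypothesis df0 : df 0 = -1.
Hypothesis df_incr : strictly_increasing_on_dom Rr df.

Lemma neg_f_lt_self (t : R) : 0 < t < Rr -> - f t < t.
Proof.
  intros Ht.
  assert (H0 : in_dom Rr 0) by (unfold in_dom; lra).
  destruct (has_deriv_on_dom_cont Rr f 0 (df 0) H0 (f_deriv 0 H0) (f 0) f0_pos)
    as [d [Hd0 Hcont]].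
  set (e := Rmin (d / 2) (t / 2)).
  pose proof (Rmin_l (d / 2) (t / 2)); pose proof (Rmin_r (d / 2) (t / 2)).
  assert (He : 0 < e) by (apply Rmin_pos; lra).
  assert (Hfe : 0 < f e).
  { assert (Hclose := Hcont e ltac:(unfold in_dom, e in *; lra)
                        ltac:(rewrite Rminus_0_r, Rabs_right; unfold e in *; lra)).
    apply Rabs_def2 in Hclose; lra. }
  assert (f e + 1 * e <= f t + 1 * t).
  { apply add_linear_le_of_deriv_ge; unfold e in *; try lra.
    intros c Hc.
    assert (df 0 < df c) by (apply df_incr; unfold in_dom; lra).
    lra. }
  lra.
Qed.

Hypothesis Rr_pos : 0 < Rr.
Variable tbar : R.
Hypothesis tbar_lub : is_lub (fun t => in_dom Rr t /\ df t < 0) tbar.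

Lemma tbar_ge0 : 0 <= tbar.
Proof. apply tbar_lub; split; [unfold in_dom | rewrite df0]; lra. Qed.

Lemma tbar_le_Rr : tbar <= Rr.
Proof. apply tbar_lub; intros t [Ht _]; unfold in_dom in Ht; lra. Qed.

Lemma df_neg_lt_tbar (rho : R) : 0 <= rho -> rho < tbar -> df rho < 0.
Proof.
  intros Hrho0 Hrho.
  pose proof tbar_le_Rr.
  destruct (Rlt_le_dec (df rho) 0) as [Hneg | Hnneg]; [exact Hneg | exfalso].
  assert (tbar <= rho); [| lra].
  apply tbar_lub; intros x [Hx Hdx].
  destruct (Rle_lt_dec x rho) as [Hle | Hgt]; [exact Hle |].
  assert (df rho < df x) by (apply df_incr; unfold in_dom in *; lra).
  lra.
Qed.

Lemma df_ge0_gt_tbar (c : R) : in_dom Rr c -> tbar < c -> 0 <= df c.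
Proof.
  intros Hc Hct.
  destruct (Rlt_le_dec (df c) 0) as [Hneg | Hnneg]; [exfalso | exact Hnneg].
  assert (c <= tbar) by (apply tbar_lub; split; assumption).
  lra.
Qed.

Lemma neg_f_le_tbar (t : R) : in_dom Rr t -> - f t <= tbar.
Proof.
  intros [Ht0 HtR].
  pose proof tbar_ge0.
  destruct (Rle_lt_dec t tbar) as [Hle | Hgt].
  - destruct (Req_dec t 0) as [-> | Hne]; [lra |].
    pose proof (neg_f_lt_self t ltac:(lra)); lra.
  - destruct (Rle_lt_dec (- f t) tbar) as [Hle | Hneg]; [exact Hle | exfalso].
    (* a point [s] of [(tbar, t)] below [-f t] would give [-f t <= -f s < s] *)
    set (s := (tbar + Rmin (- f t) t) / 2).
    assert (Hmin : tbar < Rmin (- f t) t) by (apply Rmin_glb_lt; lra).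
    pose proof (Rmin_l (- f t) t); pose proof (Rmin_r (- f t) t).
    assert (- f s < s) by (apply neg_f_lt_self; unfold s; lra).
    assert (f s + 0 * s <= f t + 0 * t).
    { apply add_linear_le_of_deriv_ge; unfold s in *; try lra.
      intros c Hc.
      assert (0 <= df c) by (apply df_ge0_gt_tbar; unfold in_dom; lra).
      lra. }
    unfold s in *; lra.
Qed.

End Proposition5p2.

Theorem proposition5p2 (Rr : R) (f df : R -> R) (beta tbar rho : R)
  (Hf : C1_on_dom Rr f df)
  (h1a : 0 < f 0) (h1b : df 0 = -1)
  (h2a : strictly_increasing_on_dom Rr df) (h2b : convex_on_dom Rr df)
  (h3 : exists t, 0 < t < Rr /\ f t < 0)
  (Hbeta : is_lub (fun y => exists t, in_dom Rr t /\ y = - f t) beta)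
  (Htbar : is_lub (fun t => in_dom Rr t /\ df t < 0) tbar)
  (Hrho : 0 <= rho < beta / 2) :
  rho < tbar / 2 /\ tbar / 2 < tbar /\ df rho < 0.
Proof.
  destruct Hf as [f_deriv _].
  destruct h3 as [t3 [Ht3 Hft3]].
  assert (Rr_pos : 0 < Rr) by lra.
  assert (beta_pos : 0 < beta).
  { assert (- f t3 <= beta) by (apply Hbeta; exists t3; split; [unfold in_dom |]; lra).
    lra. }
  assert (beta_le_tbar : beta <= tbar).
  { apply Hbeta; intros y [t [Ht ->]].
    exact (neg_f_le_tbar Rr f df f_deriv h1a h1b h2a Rr_pos tbar Htbar t Ht). }
  split; [lra |]; split; [lra |].
  apply (df_neg_lt_tbar Rr df h2a tbar Htbar); lra.
Qed.
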